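(* For $i\ge0$, the ring homomorphism $\phi_i:(A/\!/A(i))_*\to(A/\!/A(i-1))_*$ defined on the polynomial generators by $\phi_i(\bar\xi_k^{2^l})=\bar\xi_{k-1}^{2^l}$ for $k>1$ and $\phi_i(\bar\xi_1^{2^{i+1}})=1$ is a map of ungraded $A(i)_*$-comodules.
   Context: $A_*$ is the mod $2$ dual Steenrod algebra, $\bar\xi_k$ the conjugate of Milnor's generator $\xi_k$, $|\bar\xi_k|=2^k-1$, with coproduct $\psi(\bar\xi_k)=\sum_{k_1+k_2=k}\bar\xi_{k_1}\otimes\bar\xi_{k_2}^{2^{k_1}}$. For $i\ge-1$, $A(i)_*=\mathbb{F}_2[\bar\xi_1,\dots,\bar\xi_{i+1}]/(\bar\xi_1^{2^{i+1}},\bar\xi_2^{2^i},\dots,\bar\xi_{i+1}^2)$ is the quotient Hopf algebra of $A_*$ dual to $A(i)$, and $(A/\!/A(i))_*=A_*\square_{A(i)_*}\mathbb{F}_2=\mathbb{F}_2[\bar\xi_1^{2^{i+1}},\bar\xi_2^{2^i},\dots,\bar\xi_{i+1}^2,\bar\xi_{i+2},\bar\xi_{i+3},\dots]$, a left $A_*$-subcomodule algebra of $A_*$; it is regarded as an $A(i)_*$-comodule via $A_*\to A(i)_*$ (and likewise $(A/\!/A(i-1))_*$). *)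

From mathcomp Require Import all_boot.
Set Implicit Arguments. Unset Strict Implicit. Unset Printing Implicit Defensive.

(* A monomial in the \bar\xi_k (k >= 1) is a finite multiset of indices:
   the exponent of \bar\xi_k in m is [count_mem k m].  Entries are meant to
   be >= 1 (the index 0 never occurs: \bar\xi_0 = 1 is not a variable). *)
Definition mono := seq nat.
Definition expo (m : mono) (k : nat) : nat := count_mem k m.

(* An element of A_* : the sum (over F_2) of the listed monomials. *)
Definition poly := seq mono.

Definition tmono := (mono * mono)%type.
Definition tpoly := seq tmono.

(* Two tensor monomials are the same monomial iff they have the same
   exponents, i.e. their index multisets agree on each side. *)
Definition tmono_eq (a b : tmono) : bool := perm_eq a.1 b.1 && perm_eq a.2 b.2.

Definition tcoef (p : tpoly) (a : tmono) : bool := odd (count (tmono_eq a) p).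

Definition teq (p q : tpoly) : Prop := forall a : tmono, tcoef p a = tcoef q a.

Definition tone : tpoly := [:: ([::], [::])].
Definition tmul (p q : tpoly) : tpoly :=
  [seq (a.1 ++ b.1, a.2 ++ b.2) | a <- p, b <- q].

(* \bar\xi_j as a monomial, with \bar\xi_0 = 1. *)
Definition xim (j : nat) : mono := if j == 0 then [::] else [:: j].
Definition xipow (j e : nat) : mono := if j == 0 then [::] else nseq e j.

(* The coproduct on a generator:
   psi(\bar\xi_k) = sum_{k1 + k2 = k} \bar\xi_{k1} (x) \bar\xi_{k2}^{2^{k1}}. *)
Definition psi_gen (k : nat) : tpoly :=
  [seq (xim k1, xipow (k - k1) (2 ^ k1)) | k1 <- iota 0 k.+1].

Definition psi_mono (m : mono) : tpoly := foldr (fun k acc => tmul (psi_gen k) acc) tone m.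
Definition psi (x : poly) : tpoly := flatten (map psi_mono x).

(* A monomial survives in A(i)_* = F_2[\bar\xi_1..\bar\xi_{i+1}]/
   (\bar\xi_1^{2^{i+1}}, \bar\xi_2^{2^i}, ..., \bar\xi_{i+1}^2)
   iff every variable occurring is some \bar\xi_k with 1 <= k <= i+1 and
   its exponent is < 2^{i+2-k}.  Since the ideal is a monomial ideal, the
   projection A_* -> A(i)_* kills exactly the other monomials. *)
Definition in_Ai_basis (i : nat) (m : mono) : bool :=
  all (fun k => [&& 0 < k, k <= i.+1 & expo m k < 2 ^ (i.+2 - k)]) m.

(* (pi_i (x) id) : A_* (x) A_* -> A(i)_* (x) A_*  (A(i)_* represented by
   its monomial basis inside A_* ). *)
Definition proj_left (i : nat) (p : tpoly) : tpoly :=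
  [seq a <- p | in_Ai_basis i a.1].

(* x lies in (A//A(i))_* = F_2[\bar\xi_1^{2^{i+1}}, \bar\xi_2^{2^i}, ...,
   \bar\xi_{i+1}^2, \bar\xi_{i+2}, ...]: every monomial of x is a monomial
   in these polynomial generators, i.e. for k <= i+1 the exponent of
   \bar\xi_k is divisible by 2^{i+2-k}. *)
Definition in_quot_mono (i : nat) (m : mono) : bool :=
  all (fun k => (0 < k) && ((k <= i.+1) ==> (2 ^ (i.+2 - k) %| expo m k))) m.
Definition in_quot (i : nat) (x : poly) : bool := all (in_quot_mono i) x.

(* phi_i : (A//A(i))_* -> (A//A(i-1))_*, the ring homomorphism with
   phi_i(\bar\xi_k^{2^l}) = \bar\xi_{k-1}^{2^l} (k > 1) and
   phi_i(\bar\xi_1^{2^{i+1}}) = 1.  On a monomial (product of powers of the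
   polynomial generators) it drops the \bar\xi_1 factors and replaces each
   \bar\xi_k (k > 1) by \bar\xi_{k-1}.  (The index i only matters through the
   domain (A//A(i))_*.) *)
Definition phi_mono (i : nat) (m : mono) : mono := [seq k.-1 | k <- m & 1 < k].
Definition phi (i : nat) (x : poly) : poly := map (phi_mono i) x.

Definition id_tensor_phi (i : nat) (p : tpoly) : tpoly :=
  [seq (a.1, phi_mono i a.2) | a <- p].

From mathcomp Require Import all_boot.
Set Implicit Arguments. Unset Strict Implicit. Unset Printing Implicit Defensive.

(* Consequently the identity to prove is additive and multiplicative in the
   monomials of (A//A(i))_*, and invariant under reordering their indices; it
   therefore suffices to check it on the polynomial generators
   xi_k^(2^(i+2-k)).  There Frobenius computes psi explicitly, and the two
   sides differ by the single term xi_k^(2^(i+2-k)) (x) ..., whose left factor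
   vanishes in A(i)_*. *)

Section ParityOfCounts.
Variable T : eqType.
Implicit Types (P : pred T) (s t : seq T).

Lemma even_count_of_even_mults P t :
  (forall x, ~~ odd (count_mem x t)) -> ~~ odd (count P t).
Proof.
move=> even_t; rewrite -(permP (perm_count_undup t)) count_flatten -map_comp.
elim: (undup t) => //= x r IH.
by rewrite oddD count_nseq oddM (negbTE (even_t x)) andbF.
Qed.

Lemma odd_count_of_odd_mults P s t :
  (forall x, odd (count_mem x s) = odd (count_mem x t)) ->
  odd (count P s) = odd (count P t).
Proof.
elim: s t => [|y s IH] t /= same_mults.
  by apply/esym/negbTE/even_count_of_even_mults => x; rewrite -same_mults.
rewrite oddD (IH (y :: t)) /= ?oddD ?addbA ?addbb // => x.
by rewrite /= oddD -same_mults oddD addbA addbb.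
Qed.

End ParityOfCounts.

Definition canon (a : tmono) : tmono := (sort leq a.1, sort leq a.2).

Lemma tmono_eq_canon a b : tmono_eq a b = (canon a == canon b).
Proof.
by rewrite /tmono_eq /canon xpair_eqE /=
  !(sameP (perm_sortP leq_total leq_trans anti_leq _ _) eqP).
Qed.

Lemma canonK a : canon (canon a) = canon a.
Proof. by rewrite /canon /= !(sorted_sort leq_trans (sort_sorted leq_total _)). Qed.

Lemma tmono_eq_refl a : tmono_eq a a.
Proof. by rewrite tmono_eq_canon. Qed.

Lemma tmono_eqR a u v : tmono_eq u v -> tmono_eq a u = tmono_eq a v.
Proof. by rewrite !tmono_eq_canon => /eqP ->. Qed.

Definition class_inv (Q : pred tmono) := forall u v, tmono_eq u v -> Q u = Q v.

Lemma count_canon (Q : pred tmono) p : class_inv Q -> count Q p = count Q (map canon p).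
Proof.
move=> Q_inv; rewrite count_map; apply: eq_count => u /=.
by apply: Q_inv; rewrite tmono_eq_canon canonK.
Qed.

Lemma teq_canon p q : teq p q ->
  forall c, odd (count_mem c (map canon p)) = odd (count_mem c (map canon q)).
Proof.
move=> pq c; have [<-|not_canon] := eqVneq (canon c) c.
  have count_class r : count_mem (canon c) (map canon r) = count (tmono_eq c) r.
    by rewrite count_map; apply: eq_count => u; rewrite /= tmono_eq_canon eq_sym.
  by rewrite !count_class; apply: pq.
have no_c r : count_mem c (map canon r) = 0.
  by apply/count_memPn/mapP => -[a _ c_a]; rewrite c_a canonK eqxx in not_canon.
by rewrite !no_c.
Qed.

Lemma teq_count (Q : pred tmono) p q : class_inv Q -> teq p q ->
  odd (count Q p) = odd (count Q q).
Proof.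
move=> Q_inv pq; rewrite (count_canon p Q_inv) (count_canon q Q_inv).
exact/odd_count_of_odd_mults/teq_canon.
Qed.

Lemma teq_refl p : teq p p. Proof. by []. Qed.
Lemma teq_sym p q : teq p q -> teq q p. Proof. by move=> pq a; rewrite pq. Qed.
Lemma teq_trans p q r : teq p q -> teq q r -> teq p r.
Proof. by move=> pq qr a; rewrite pq qr. Qed.

Lemma teq_cat p p' q q' : teq p p' -> teq q q' -> teq (p ++ q) (p' ++ q').
Proof. by move=> pp' qq' a; rewrite /tcoef !count_cat !oddD -!/(tcoef _ _) pp' qq'. Qed.

Lemma teq_map (f : tmono -> tmono) p q :
  (forall u v, tmono_eq u v -> tmono_eq (f u) (f v)) -> teq p q -> teq (map f p) (map f q).
Proof.
move=> f_eq pq a; rewrite /tcoef !count_map; apply: teq_count pq => u v uv /=.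
exact/tmono_eqR/f_eq.
Qed.

Lemma teq_filter (B : pred tmono) p q :
  class_inv B -> teq p q -> teq (filter B p) (filter B q).
Proof.
move=> B_inv pq a; rewrite /tcoef !count_filter; apply: teq_count pq => u v uv /=.
by rewrite (tmono_eqR a uv) (B_inv _ _ uv).
Qed.

Definition tmono_mul (u v : tmono) : tmono := (u.1 ++ v.1, u.2 ++ v.2).

Lemma tmulE p q : tmul p q = [seq tmono_mul a b | a <- p, b <- q].
Proof. by []. Qed.

Lemma tmono_mul_eq u u' v v' :
  tmono_eq u u' -> tmono_eq v v' -> tmono_eq (tmono_mul u v) (tmono_mul u' v').
Proof.
rewrite /tmono_eq /tmono_mul /= => /andP[u1 u2] /andP[v1 v2].
by rewrite (perm_cat u1 v1) (perm_cat u2 v2).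
Qed.

Lemma tmono_mulC u v : tmono_eq (tmono_mul u v) (tmono_mul v u).
Proof. by apply/andP; split; apply/permEl/perm_catC. Qed.

Lemma tmono_mulA u v w : tmono_mul (tmono_mul u v) w = tmono_mul u (tmono_mul v w).
Proof. by rewrite /tmono_mul /= !catA. Qed.

Lemma sum_indicator (I : Type) (P : pred I) (s : seq I) : \sum_(x <- s) P x = count P s.
Proof. by elim: s => [|x s IH]; rewrite ?big_nil // big_cons IH. Qed.

Lemma count_tmul (Q : pred tmono) p q :
  count Q (tmul p q) = \sum_(u <- p) \sum_(v <- q) Q (tmono_mul u v).
Proof. by rewrite -sum_indicator tmulE big_allpairs_dep. Qed.

Lemma odd_sum_count (I : Type) (F : I -> nat) (s : seq I) :
  odd (\sum_(x <- s) F x) = odd (count (fun x => odd (F x)) s).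
Proof.
by elim: s => [|x s IH]; rewrite ?big_nil ?big_cons //= oddD IH; case: (odd (F x)).
Qed.

Lemma tmul_teq p p' q q' : teq p p' -> teq q q' -> teq (tmul p q) (tmul p' q').
Proof.
move=> pp' qq' a; rewrite /tcoef !count_tmul !odd_sum_count.
transitivity (odd (count (fun u => odd (\sum_(v <- q) tmono_eq a (tmono_mul u v))) p')).
  apply: teq_count pp' => u u' uu'; congr odd; apply: eq_bigr => v _.
  by rewrite (tmono_eqR a (tmono_mul_eq uu' (tmono_eq_refl v))).
congr odd; apply: eq_count => u /=; rewrite !sum_indicator.
by apply: teq_count qq' => v v' vv'; apply: tmono_eqR (tmono_mul_eq (tmono_eq_refl u) vv').
Qed.

Lemma tmulC p q : teq (tmul p q) (tmul q p).
Proof.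
move=> a; rewrite /tcoef !count_tmul exchange_big /=; congr odd.
by apply: eq_bigr => v _; apply: eq_bigr => u _; rewrite (tmono_eqR a (tmono_mulC u v)).
Qed.

Lemma tmulA p q r : teq (tmul (tmul p q) r) (tmul p (tmul q r)).
Proof.
move=> a; rewrite /tcoef !count_tmul; congr odd.
rewrite tmulE big_allpairs_dep; apply: eq_bigr => u _.
rewrite tmulE big_allpairs_dep; apply: eq_bigr => v _.
by apply: eq_bigr => w _; rewrite tmono_mulA.
Qed.

Lemma tmul_cons u p q : tmul (u :: p) q = map (tmono_mul u) q ++ tmul p q.
Proof. by []. Qed.

Lemma tmul1 q : tmul tone q = q.
Proof. by rewrite tmul_cons cats0 -[RHS]map_id; apply: eq_map => -[]. Qed.

Definition tmono_exp (n : nat) (u : tmono) : tmono :=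
  (flatten (nseq n u.1), flatten (nseq n u.2)).

Lemma tmul_tone p : tmul p tone = map (tmono_exp 1) p.
Proof. by elim: p => [|u p IH] //; rewrite tmul_cons IH. Qed.

Lemma odd_symmetric_sum (I : Type) (F : I -> I -> nat) (s : seq I) :
  (forall u v, F u v = F v u) ->
  odd (\sum_(u <- s) \sum_(v <- s) F u v) = odd (\sum_(u <- s) F u u).
Proof.
move=> F_sym; elim: s => [|x s IH]; first by rewrite !big_nil.
have split_row : \sum_(u <- s) \sum_(v <- x :: s) F u v
    = \sum_(v <- s) F x v + \sum_(u <- s) \sum_(v <- s) F u v.
  by rewrite -big_split; apply: eq_bigr => u _; rewrite big_cons F_sym.
rewrite big_cons split_row big_cons [in RHS]big_cons /= !oddD -IH.
by case: (odd (F x x)); case: (odd (\sum_(v <- s) F x v)); case: (odd (\sum_(u <- s) _)).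
Qed.

Lemma tmul_sqr p : teq (tmul p p) (map (tmono_exp 2) p).
Proof.
move=> a; rewrite /tcoef count_tmul count_map -sum_indicator.
rewrite (odd_symmetric_sum (F := fun u v => tmono_eq a (tmono_mul u v))); last first.
  by move=> u v; rewrite (tmono_eqR a (tmono_mulC u v)).
by congr odd; apply: eq_bigr => u _; rewrite /tmono_exp /tmono_mul /= !cats0.
Qed.

Lemma tmono_exp_eq n u v : tmono_eq u v -> tmono_eq (tmono_exp n u) (tmono_exp n v).
Proof.
have perm_pow (s t : seq nat) :
    perm_eq s t -> perm_eq (flatten (nseq n s)) (flatten (nseq n t)).
  by move=> st; elim: n => [|n IH] //=; rewrite perm_cat.
by case/andP=> u1 u2; rewrite /tmono_eq !perm_pow.
Qed.

Lemma tmono_expM m n u : tmono_exp m (tmono_exp n u) = tmono_exp (m * n) u.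
Proof.
have flattenM (s : seq nat) : flatten (nseq m (flatten (nseq n s))) = flatten (nseq (m * n) s).
  by elim: m => [|m IH] //=; rewrite mulSn nseqD flatten_cat IH.
by rewrite /tmono_exp /= !flattenM.
Qed.

Lemma psi_cons k m : psi_mono (k :: m) = tmul (psi_gen k) (psi_mono m).
Proof. by []. Qed.

Lemma psi_cat a b : teq (psi_mono (a ++ b)) (tmul (psi_mono a) (psi_mono b)).
Proof.
elim: a => [|k a IH]; first by rewrite tmul1.
rewrite cat_cons !psi_cons; apply: (teq_trans (tmul_teq (teq_refl _) IH)).
exact/teq_sym/tmulA.
Qed.

Lemma psi_perm m m' : perm_eq m m' -> teq (psi_mono m) (psi_mono m').
Proof.
elim: m m' => [|k m IH] m' mm'.
  by move: mm'; rewrite perm_sym => /perm_nilP ->.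
have k_m' : k \in m' by rewrite -(perm_mem mm') mem_head.
move: mm'; case/splitPr: k_m' => t1 t2 mm'.
have m_t : perm_eq m (t1 ++ t2).
  by rewrite -(perm_cons k); apply: (perm_trans mm'); rewrite -cat1s; apply/permEl/perm_catCA.
rewrite psi_cons.
apply: (teq_trans (tmul_teq (teq_refl _) (teq_trans (IH _ m_t) (psi_cat _ _)))).
apply: (teq_trans (teq_sym (tmulA _ _ _))).
apply: (teq_trans (tmul_teq (tmulC _ _) (teq_refl _))).
exact: (teq_trans (tmulA _ _ _) (teq_sym (psi_cat t1 (k :: t2)))).
Qed.

Lemma psi_frobenius s k :
  teq (psi_mono (nseq (2 ^ s) k)) (map (tmono_exp (2 ^ s)) (psi_gen k)).
Proof.
elim: s => [|s IH]; first by rewrite psi_cons tmul_tone.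
rewrite expnS mul2n -addnn nseqD.
apply: (teq_trans (teq_trans (psi_cat _ _) (tmul_sqr _))).
apply: (teq_trans (teq_map (@tmono_exp_eq 2) IH)).
by rewrite -map_comp; under eq_map => u do rewrite /= tmono_expM mul2n -addnn.
Qed.

Section ProjectionToAi.
Variable i : nat.

Lemma in_Ai_basis_perm s s' : perm_eq s s' -> in_Ai_basis i s = in_Ai_basis i s'.
Proof.
move=> ss'; rewrite /in_Ai_basis (perm_all _ ss'); apply: eq_all => k.
by rewrite /expo (permP ss').
Qed.

Lemma proj_left_class_inv : class_inv (fun a => in_Ai_basis i a.1).
Proof. by move=> u v /andP[u1 _]; apply: in_Ai_basis_perm. Qed.

Lemma teq_proj p q : teq p q -> teq (proj_left i p) (proj_left i q).
Proof. exact: (teq_filter proj_left_class_inv). Qed.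

Lemma in_Ai_basis_catl s t : in_Ai_basis i (s ++ t) -> in_Ai_basis i s.
Proof.
rewrite /in_Ai_basis all_cat => /andP[+ _]; apply: sub_all => k /and3P[-> -> ltk] /=.
by apply: leq_ltn_trans ltk; rewrite /expo count_cat leq_addr.
Qed.

Lemma in_Ai_basis_catr s t : in_Ai_basis i (s ++ t) -> in_Ai_basis i t.
Proof.
move=> st; apply: (@in_Ai_basis_catl t s).
by rewrite -(in_Ai_basis_perm (permEl (perm_catC s t))).
Qed.

Lemma proj_tmul p q :
  teq (proj_left i (tmul p q)) (proj_left i (tmul (proj_left i p) (proj_left i q))).
Proof.
move=> a; rewrite /tcoef /proj_left !count_filter !count_tmul; congr odd.
rewrite big_filter [RHS]big_mkcond; apply: eq_bigr => u _.
rewrite big_filter [in RHS]big_mkcond /=; case u_Ai: (in_Ai_basis i u.1).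
  apply: eq_bigr => v _ /=; case v_Ai: (in_Ai_basis i v.1) => //.
  case uv: (in_Ai_basis i _); first by rewrite (in_Ai_basis_catr uv) in v_Ai.
  by rewrite andbF.
apply: big1 => v _ /=.
case uv: (in_Ai_basis i _); first by rewrite (in_Ai_basis_catl uv) in u_Ai.
by rewrite andbF.
Qed.

Definition eqAi (p q : tpoly) : Prop := teq (proj_left i p) (proj_left i q).

Lemma eqAi_trans p q r : eqAi p q -> eqAi q r -> eqAi p r.
Proof. exact: teq_trans. Qed.

Lemma teq_eqAi p q : teq p q -> eqAi p q.
Proof. exact: teq_proj. Qed.

Lemma eqAi_tmul p p' q q' : eqAi p p' -> eqAi q q' -> eqAi (tmul p q) (tmul p' q').
Proof.
move=> pp' qq'; apply: (teq_trans (proj_tmul _ _)).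
exact: teq_trans (teq_proj (tmul_teq pp' qq')) (teq_sym (proj_tmul _ _)).
Qed.

End ProjectionToAi.

Lemma phi_mono_cat i a b : phi_mono i (a ++ b) = phi_mono i a ++ phi_mono i b.
Proof. by rewrite /phi_mono filter_cat map_cat. Qed.

Lemma phi_mono_perm i a b : perm_eq a b -> perm_eq (phi_mono i a) (phi_mono i b).
Proof. by move=> ab; apply/perm_map/perm_filter. Qed.

Lemma phi_xipow i j e : phi_mono i (xipow j e) = xipow j.-1 e.
Proof.
by rewrite /phi_mono /xipow; case: j => [|[|j]] //=; rewrite filter_nseq map_nseq /= ?mul1n.
Qed.

Lemma xim_xipow j : xim j = xipow j 1.
Proof. by rewrite /xim /xipow; case: (j == 0). Qed.

Lemma tmono_exp_xipow n j e j' e' :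
  tmono_exp n (xipow j e, xipow j' e') = (xipow j (n * e), xipow j' (n * e')).
Proof.
have flatten_pow j1 e1 : flatten (nseq n (xipow j1 e1)) = xipow j1 (n * e1).
  by rewrite /xipow; case: (j1 == 0); elim: n => [|n IH] //=; rewrite IH mulSn nseqD.
by rewrite /tmono_exp /= !flatten_pow.
Qed.

Lemma teq_id_tensor_phi i p q : teq p q -> teq (id_tensor_phi i p) (id_tensor_phi i q).
Proof.
apply: teq_map => u v /andP[uv1 uv2]; rewrite /tmono_eq /= uv1.
exact: phi_mono_perm.
Qed.

Lemma id_tensor_phi_tmul i p q :
  id_tensor_phi i (tmul p q) = tmul (id_tensor_phi i p) (id_tensor_phi i q).
Proof.
elim: p => [|u p IH] //; rewrite /id_tensor_phi in IH *.
rewrite tmul_cons map_cat IH /= tmul_cons -!map_comp; congr (_ ++ _).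
by apply: eq_map => v; rewrite /tmono_mul /= phi_mono_cat.
Qed.

Lemma id_tensor_phi_proj i p :
  id_tensor_phi i (proj_left i p) = proj_left i (id_tensor_phi i p).
Proof. by rewrite /id_tensor_phi /proj_left filter_map. Qed.

Definition coaction_commutes (i : nat) (m : mono) : Prop :=
  eqAi i (id_tensor_phi i (psi_mono m)) (psi_mono (phi_mono i m)).

Lemma coaction_commutes_cat i a b :
  coaction_commutes i a -> coaction_commutes i b -> coaction_commutes i (a ++ b).
Proof.
move=> ca cb; apply: (eqAi_trans (teq_eqAi _ (teq_id_tensor_phi _ (psi_cat _ _)))).
rewrite id_tensor_phi_tmul phi_mono_cat.
exact: eqAi_trans (eqAi_tmul ca cb) (teq_eqAi _ (teq_sym (psi_cat _ _))).
Qed.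

Lemma coaction_commutes_flatten i ms :
  (forall m, m \in ms -> coaction_commutes i m) -> coaction_commutes i (flatten ms).
Proof.
elim: ms => [|m ms IH] //= all_ms.
apply: coaction_commutes_cat; first by apply: all_ms; rewrite mem_head.
by apply: IH => m' m'_ms; apply: all_ms; rewrite inE m'_ms orbT.
Qed.

Lemma coaction_commutes_perm i m m' :
  perm_eq m m' -> coaction_commutes i m -> coaction_commutes i m'.
Proof.
move=> mm' cm; have m'm : perm_eq m' m by rewrite perm_sym.
apply: (eqAi_trans (teq_eqAi _ (teq_id_tensor_phi _ (psi_perm m'm)))).
exact: eqAi_trans cm (teq_eqAi _ (psi_perm (phi_mono_perm _ mm'))).
Qed.

(* By Frobenius, psi(xi_k^N) = sum_(c <= k) xi_c^N (x)
   xi_(k-c)^(N 2^c), and phi_i turns this into the sum for psi(xi_(k-1)^N)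
   plus the extra term c = k, which vanishes in A(i)_* since xi_k^N = 0 there. *)
Lemma coaction_commutes_gen i k : 0 < k -> coaction_commutes i (nseq (2 ^ (i.+2 - k)) k).
Proof.
move=> k_gt0; set N := 2 ^ (i.+2 - k).
pose h c : tmono := (xipow c N, xipow (k - c).-1 (N * 2 ^ c)).
have lhs : teq (id_tensor_phi i (psi_mono (nseq N k))) (map h (iota 0 k.+1)).
  apply: (teq_trans (teq_id_tensor_phi _ (psi_frobenius _ _))).
  rewrite /id_tensor_phi /psi_gen -!map_comp (@eq_map _ _ _ h) // => c.
  by rewrite /comp xim_xipow tmono_exp_xipow phi_xipow muln1.
have rhs : teq (psi_mono (phi_mono i (nseq N k))) (map h (iota 0 k)).
  have -> : nseq N k = xipow k N by rewrite /xipow eqn0Ngt k_gt0.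
  rewrite phi_xipow; have [k1|k_neq1] := eqVneq k 1; first by move=> a; rewrite /h k1.
  have k_gt1 : 1 < k by rewrite ltn_neqAle eq_sym k_neq1.
  rewrite /xipow -subn1 subn_eq0 leqNgt k_gt1 -[k in iota 0 k](subnK (ltnW k_gt1)) addn1.
  apply: (teq_trans (psi_frobenius _ _)).
  rewrite /psi_gen -map_comp (@eq_map _ _ _ h) // => c.
  by rewrite /comp xim_xipow tmono_exp_xipow muln1 subnAC subn1 /h.
rewrite /coaction_commutes /eqAi.
apply: (teq_trans (teq_proj _ lhs)).
apply: teq_trans (teq_proj _ (teq_sym rhs)).
have xi_k_N_not_in_Ai : in_Ai_basis i (h k).1 = false.
  rewrite /= /xipow eqn0Ngt k_gt0 /in_Ai_basis all_nseq /expo count_nseq /=.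
  by rewrite eqxx mul1n /N ltnn !andbF orbF expn_eq0.
by rewrite -[k.+1]addn1 iotaD map_cat /proj_left filter_cat /= xi_k_N_not_in_Ai cats0.
Qed.

(* Every monomial of (A//A(i))_* is, up to order, a product of polynomial
   generators xi_k^(2^(i+2-k)), k >= 1 (for k > i+1 this is just xi_k). *)
Lemma coaction_commutes_quot i m : in_quot_mono i m -> coaction_commutes i m.
Proof.
move=> /allP m_quot; apply: coaction_commutes_perm (perm_count_undup m) _.
apply/coaction_commutes_flatten => _ /mapP[k /[!mem_undup] k_m ->].
have /andP[k_gt0 N_dvd] := m_quot k k_m; set N := 2 ^ (i.+2 - k).
have /dvdnP[c ->] : N %| count_mem k m.
  case: (leqP k i.+1) N_dvd => [_ //|k_gt _].
  by rewrite /N (eqP (_ : i.+2 - k == 0)) ?subn_eq0 // dvd1n.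
have -> : nseq (c * N) k = flatten (nseq c (nseq N k)).
  by elim: c => [|c IH] //=; rewrite mulSn nseqD IH.
apply/coaction_commutes_flatten => _ /nseqP[-> _].
exact: coaction_commutes_gen.
Qed.

Theorem lemma5p1 (i : nat) (x : poly) :
  in_quot i x ->
  teq (id_tensor_phi i (proj_left i (psi x))) (proj_left i (psi (phi i x))).
Proof.
rewrite id_tensor_phi_proj; elim: x => [|m x IH] //= /andP[m_quot x_quot].
rewrite /psi /= -!/(psi _) /id_tensor_phi map_cat -!/(id_tensor_phi i _).
rewrite /proj_left !filter_cat -!/(proj_left _ _).
exact: teq_cat (coaction_commutes_quot m_quot) (IH x_quot).
Qed.
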